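(* Let $\eta > 0$. There is $\alpha_0(\eta)>0$ such that the following holds for every sufficiently large integer $X$ and every $\alpha$ with $\exp(-(\log X)^{3/4 - \eta}) \le \alpha \le \alpha_0(\eta)$: there is a function $f : \{1,\dots,X\} \to [0,1]$ such that (1) $\mathbb{E}_{x \in \{1,\dots,X\}} f(x)= \alpha$; (2) the sum of $f(x) f(y)$ over all $x, y \in \{1,\dots,X\}$ with $x - y$ a perfect square is at most $\frac{1}{100} \alpha^2 X^{3/2}$; (3) the length $X'$ of the longest arithmetic subprogression of $\{1,\dots,X\}$ on which the average of $f$ is at least $2\alpha$ satisfies $X' < X \exp (-(\log (1/\alpha))^{1/3})$. *)

From Stdlib Require Import Reals ZArith List ClassicalDescription.
Open Scope R_scope.

Definition sumR (l : list nat) (g : nat -> R) : R :=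
  fold_right (fun x acc => g x + acc) 0 l.

Definition is_perfect_square (n : Z) : Prop := exists m : Z, n = (m * m)%Z.

Definition square_pair_sum (X : nat) (f : nat -> R) : R :=
  sumR (seq 1 X) (fun x => sumR (seq 1 X) (fun y =>
    if excluded_middle_informative
         (is_perfect_square (Z.of_nat x - Z.of_nat y)%Z)
    then f x * f y else 0)).

Definition avg_interval (X : nat) (f : nat -> R) : R := sumR (seq 1 X) f / INR X.

Definition avg_AP (a d L : nat) (f : nat -> R) : R :=
  sumR (seq 0 L) (fun j => f (a + d * j)%nat) / INR L.

Definition is_subAP (X a d L : nat) : Prop :=
  (1 <= a)%nat /\ (1 <= d)%nat /\ (1 <= L)%nat /\ (a + d * (L - 1) <= X)%nat.

(* Take q = p_1 ... p_18, a product of primes just above B = exp ((log 1/alpha)^(1/3)),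
   and a set Res of 2^9 residues mod q such that s - s' = m^2 (mod q) forces s = s' and
   q | m; such a set is built two primes at a time from quadratic non-residues. Let f be
   the multiple of the indicator of {x : x mod q in Res} with mean alpha. A square difference
   x - y = m^2 inside the support forces q | m, so every x has at most sqrt X / q + 1 square
   partners and the square-pair sum is at most 4 alpha^2 X^(3/2) / |Res|. A progression with
   common difference d <= B meets the support with density about |Res| / q because d is
   invertible mod q, so f averages about alpha on it unless it is shorter than about q;
   a progression with d > B is shorter than X / B anyway. The primes come from the
   Chebyshev-type bound p^(v_p(C(2n, n))) <= 2n. *)

From Stdlib Require Import Reals ZArith List ClassicalDescription.
From Stdlib Require Import Lia Lra Psatz Znumtheory FinFun Classical.

(** * Residue sets avoiding square differences *)

Open Scope Z_scope.

Lemma NoDup_map_inj_in {A B} (f : A -> B) (l : list A) x y :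
  NoDup (map f l) -> In x l -> In y l -> f x = f y -> x = y.
Proof.
  induction l as [|a l IH]; simpl; intros nd x_in y_in fxy; [contradiction|].
  inversion nd as [|? ? fa_notin nd_l]; subst.
  destruct x_in as [<-|x_in], y_in as [<-|y_in]; auto;
    exfalso; apply fa_notin; [rewrite fxy|rewrite <- fxy]; now apply in_map.
Qed.

Lemma exists_nonsquare_mod (p : Z) : 3 <= p -> exists r, forall m, ~ (p | r - m * m).
Proof.
  intros p_ge3.
  set (residues := map Z.of_nat (seq 0 (Z.to_nat p))).
  set (sq := fun m => (m * m) mod p).
  assert (in_residues : forall z, In z residues <-> 0 <= z < p).
  { intros z. unfold residues. rewrite in_map_iff. split.
    - intros [n [<- n_in]]. apply in_seq in n_in. lia.
    - intros z_range. exists (Z.to_nat z). rewrite in_seq. lia. }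
  (* 1 and p - 1 have the same square, so squaring does not hit every residue. *)
  assert (not_onto : ~ incl residues (map sq residues)).
  { intros onto.
    assert (sq_nd : NoDup (map sq residues)).
    { apply (NoDup_incl_NoDup (l := residues)); [|now rewrite length_map|exact onto].
      apply Injective_map_NoDup; [intros x y; lia|apply seq_NoDup]. }
    assert (collision : sq 1 = sq (p - 1)).
    { unfold sq. replace ((p - 1) * (p - 1)) with (1 + (p - 2) * p) by ring.
      now rewrite Z.mod_add by lia. }
    enough (1 = p - 1) by lia.
    apply (NoDup_map_inj_in _ _ _ _ sq_nd); auto; apply in_residues; lia. }
  apply not_all_ex_not in not_onto as [r r_missed].
  apply imply_to_and in r_missed as [r_in r_missed].
  exists r. intros m [c m_sq]. apply r_missed, in_map_iff.
  exists (m mod p). split.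
  - apply in_residues in r_in. unfold sq.
    rewrite <- Z.mul_mod by lia.
    replace (m * m) with (r + (- c) * p) by lia.
    rewrite Z.mod_add by lia. now apply Z.mod_small.
  - apply in_residues, Z.mod_pos_bound. lia.
Qed.

Lemma exists_nonsquare_multiple (p Q : Z) : prime p -> 3 <= p -> ~ (p | Q) ->
  exists t, forall m, ~ (p | t * Q - m * m).
Proof.
  intros p_pr p_ge3 p_ndvd_Q.
  destruct (exists_nonsquare_mod p p_ge3) as [r r_nonsq].
  destruct (rel_prime_bezout _ _ (rel_prime_sym _ _ (prime_rel_prime _ p_pr _ p_ndvd_Q)))
    as [u w Bezout].
  exists (r * u). intros m dvd. apply (r_nonsq m).
  replace (r - m * m) with (r * (u * Q + w * p) - m * m) by (rewrite Bezout; ring).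
  replace (r * (u * Q + w * p) - m * m) with ((r * u * Q - m * m) + (r * w) * p) by ring.
  apply Z.divide_add_r; [exact dvd|apply Z.divide_factor_r].
Qed.

Definition square_difference_free (q : Z) (Res : list Z) : Prop :=
  forall s s' m, In s Res -> In s' Res -> (q | s - s' - m * m) -> s = s'.

Lemma prime_ndvd_mul (p x y : Z) : prime p -> ~ (p | x) -> ~ (p | y) -> ~ (p | x * y).
Proof. intros p_pr ndvd_x ndvd_y dvd. destruct (prime_mult p p_pr x y dvd); contradiction. Qed.

Section Shifts.
Variables (q Q c0 c1 : Z) (Res : list Z).
Hypothesis shifts_cong : (q | c0 - c1).
Hypothesis shift_nonsq : forall m, ~ (Q | c0 - c1 - m * m).
Hypothesis Res_sdf : square_difference_free q Res.

Let shifted : list Z := map (fun s => s + c0) Res ++ map (fun s => s + c1) Res.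

Let In_shifted x : In x shifted -> exists s c, x = s + c /\ In s Res /\ (c = c0 \/ c = c1).
Proof.
  intros x_in. apply in_app_or in x_in as [x_in|x_in];
    apply in_map_iff in x_in as [s [<- s_in]]; exists s; [exists c0|exists c1]; auto.
Qed.

Let shifted_base_eq c c' s s' m : c = c0 \/ c = c1 -> c' = c0 \/ c' = c1 -> In s Res -> In s' Res ->
  (q | (s + c) - (s' + c') - m * m) -> s = s'.
Proof.
  intros c_shift c'_shift s_in s'_in dvd. apply (Res_sdf s s' m s_in s'_in).
  replace (s - s' - m * m) with (((s + c) - (s' + c') - m * m) - (c - c')) by ring.
  apply Z.divide_sub_r; [assumption|].
  destruct c_shift as [->| ->], c'_shift as [->| ->];
    [rewrite Z.sub_diag; apply Z.divide_0_r|assumption|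
     apply Z.divide_opp_r; now replace (- (c1 - c0)) with (c0 - c1) by ring|
     rewrite Z.sub_diag; apply Z.divide_0_r].
Qed.

Lemma NoDup_shifts : NoDup Res -> NoDup shifted.
Proof.
  intros Res_nd.
  apply NoDup_app; try (apply Injective_map_NoDup; [intros x y; lia|exact Res_nd]).
  intros x x_in0 x_in1.
  apply in_map_iff in x_in0 as [s [<- s_in]]. apply in_map_iff in x_in1 as [s' [x_eq s'_in]].
  assert (s' = s) as ->.
  { apply (shifted_base_eq c1 c0 s' s 0); auto. rewrite x_eq, Z.sub_diag. apply Z.divide_0_r. }
  apply (shift_nonsq 0). replace (c0 - c1 - 0 * 0) with (s + c0 - (s + c1)) by ring.
  rewrite x_eq, Z.sub_diag. apply Z.divide_0_r.
Qed.

Lemma square_difference_free_shifts : (q | Q) -> (forall m, ~ (Q | c1 - c0 - m * m)) ->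
  square_difference_free Q shifted.
Proof.
  intros q_dvd_Q shift_nonsq' x x' m x_in x'_in dvd.
  destruct (In_shifted x x_in) as [s [c [-> [s_in c_shift]]]].
  destruct (In_shifted x' x'_in) as [s' [c' [-> [s'_in c'_shift]]]].
  assert (s = s') as <-.
  { apply (shifted_base_eq c c' s s' m); auto. eapply Z.divide_trans; eassumption. }
  destruct c_shift as [->| ->], c'_shift as [->| ->]; try reflexivity; exfalso;
    [apply (shift_nonsq m)|apply (shift_nonsq' m)];
    [replace (c0 - c1 - m * m) with ((s + c0) - (s + c1) - m * m) by ring
    |replace (c1 - c0 - m * m) with ((s + c1) - (s + c0) - m * m) by ring]; assumption.
Qed.

End Shifts.

Lemma square_difference_free_extend (q a b : Z) (Res : list Z) :
  prime a -> prime b -> 3 <= a -> 3 <= b -> a <> b -> ~ (a | q) -> ~ (b | q) ->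
  NoDup Res -> square_difference_free q Res ->
  exists Res', length Res' = (2 * length Res)%nat /\ NoDup Res' /\
    square_difference_free (a * b * q) Res'.
Proof.
  intros a_pr b_pr a_ge3 b_ge3 a_neq_b a_ndvd_q b_ndvd_q Res_nd Res_sdf.
  assert (a_ndvd_b : ~ (a | b)) by (intros dvd; now apply a_neq_b, prime_div_prime).
  assert (b_ndvd_a : ~ (b | a)) by (intros dvd; now apply a_neq_b, eq_sym, prime_div_prime).
  destruct (exists_nonsquare_multiple a (q * b)) as [v v_nonsq];
    [assumption|assumption|now apply prime_ndvd_mul|].
  destruct (exists_nonsquare_multiple b (q * a)) as [u u_nonsq];
    [assumption|assumption|now apply prime_ndvd_mul|].
  (* c0 - c1 is a non-square mod a, and c1 - c0 one mod b. *)
  set (c0 := q * b * v). set (c1 := q * a * u).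
  assert (shifts_cong : (q | c0 - c1)) by (exists (b * v - a * u); unfold c0, c1; ring).
  assert (nonsq01 : forall m, ~ (a * b * q | c0 - c1 - m * m)).
  { intros m dvd. apply (v_nonsq m).
    replace (v * (q * b) - m * m) with ((c0 - c1 - m * m) + a * (q * u)) by (unfold c0, c1; ring).
    apply Z.divide_add_r; [|apply Z.divide_factor_l].
    eapply Z.divide_trans; [|exact dvd]. exists (b * q). ring. }
  assert (nonsq10 : forall m, ~ (a * b * q | c1 - c0 - m * m)).
  { intros m dvd. apply (u_nonsq m).
    replace (u * (q * a) - m * m) with ((c1 - c0 - m * m) + b * (q * v)) by (unfold c0, c1; ring).
    apply Z.divide_add_r; [|apply Z.divide_factor_l].
    eapply Z.divide_trans; [|exact dvd]. exists (a * q). ring. }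
  exists (map (fun s => s + c0) Res ++ map (fun s => s + c1) Res). split; [|split].
  - rewrite length_app, !length_map. lia.
  - now apply (NoDup_shifts q (a * b * q)).
  - apply (square_difference_free_shifts q); try assumption. exists (a * b). ring.
Qed.

Definition Zprod (P : list Z) : Z := fold_right Z.mul 1 P.

Lemma Zprod_pos (P : list Z) : Forall (fun p => 0 < p) P -> 0 < Zprod P.
Proof. induction 1; simpl; lia. Qed.

Lemma dvd_Zprod (P : list Z) p : In p P -> (p | Zprod P).
Proof.
  induction P as [|a P IH]; simpl; [easy|].
  intros [<-|p_in]; [apply Z.divide_factor_l|apply Z.divide_mul_r; auto].
Qed.

Lemma prime_ndvd_Zprod (P : list Z) p : prime p -> Forall prime P -> ~ In p P -> ~ (p | Zprod P).
Proof.
  intros p_pr. induction 1 as [|a P a_pr _ IH]; simpl; intros p_notin dvd.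
  - apply prime_ge_2 in p_pr. apply Z.divide_pos_le in dvd; lia.
  - destruct (prime_mult p p_pr _ _ dvd) as [dvd_a|dvd_P].
    + apply p_notin. left. symmetry. now apply prime_div_prime.
    + apply IH; auto.
Qed.

Lemma Zprod_dvd (P : list Z) z : NoDup P -> Forall prime P ->
  (forall p, In p P -> (p | z)) -> (Zprod P | z).
Proof.
  intros P_nd P_pr. induction P_pr as [|a P a_pr P_pr IH]; simpl; intros all_dvd.
  - apply Z.divide_1_l.
  - inversion P_nd as [|? ? a_notin P_nd']; subst.
    destruct IH as [c ->]; [assumption|intros p p_in; apply all_dvd; now right|].
    assert (a_dvd_c : (a | c)).
    { apply Gauss with (Zprod P).
      - rewrite Z.mul_comm. apply all_dvd. now left.
      - apply prime_rel_prime; [assumption|]. now apply prime_ndvd_Zprod. }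
    destruct a_dvd_c as [e ->]. exists e. ring.
Qed.

Lemma square_difference_free_exists (n : nat) (P : list Z) :
  length P = (2 * n)%nat -> NoDup P -> Forall (fun p => prime p /\ 3 <= p) P ->
  exists Res, length Res = (2 ^ n)%nat /\ NoDup Res /\ square_difference_free (Zprod P) Res.
Proof.
  revert P. induction n as [|n IH]; intros P P_len P_nd P_spec.
  - destruct P; [|discriminate].
    exists (0 :: nil). repeat split; [repeat constructor; easy|].
    intros s s' m [<-|[]] [<-|[]] _. reflexivity.
  - destruct P as [|a [|b P]]; simpl in P_len; try lia.
    inversion P_nd as [|? ? a_notin P_nd1]; inversion P_nd1 as [|? ? b_notin P_nd2]; subst.
    inversion P_spec as [|? ? [a_pr a_ge3] P_spec1];
      inversion P_spec1 as [|? ? [b_pr b_ge3] P_spec2]; subst.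
    assert (P_pr : Forall prime P) by exact (Forall_impl _ (fun p p_spec => proj1 p_spec) P_spec2).
    destruct (IH P ltac:(lia) P_nd2 P_spec2) as [Res [Res_len [Res_nd Res_sdf]]].
    destruct (square_difference_free_extend (Zprod P) a b Res)
      as [Res' [Res'_len [Res'_nd Res'_sdf]]]; try assumption.
    + intros ->. apply a_notin. now left.
    + apply prime_ndvd_Zprod; auto. intros a_in. apply a_notin. now right.
    + now apply prime_ndvd_Zprod.
    + exists Res'. split; [rewrite Res'_len, Res_len; simpl; lia|]. split; [assumption|].
      simpl. now rewrite Z.mul_assoc.
Qed.

Lemma Zprod_dvd_square (P : list Z) m : NoDup P -> Forall prime P ->
  (Zprod P | m * m) -> (Zprod P | m).
Proof.
  intros P_nd P_pr dvd. apply Zprod_dvd; [assumption|assumption|]. intros p p_in.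
  assert (p_dvd : (p | m * m))
    by (apply (Z.divide_trans _ (Zprod P)); [now apply dvd_Zprod|exact dvd]).
  rewrite Forall_forall in P_pr. now destruct (prime_mult p (P_pr p p_in) m m p_dvd).
Qed.

Lemma Zprod_cancel_small (P : list Z) (b d : nat) z :
  NoDup P -> Forall (fun p => prime p /\ Z.of_nat b < p) P -> (1 <= d <= b)%nat ->
  (Zprod P | Z.of_nat d * z) -> (Zprod P | z).
Proof.
  intros P_nd P_spec d_range dvd.
  apply Zprod_dvd; [assumption|eapply Forall_impl; [|exact P_spec]; now intros ? []|].
  intros p p_in. rewrite Forall_forall in P_spec. destruct (P_spec p p_in) as [p_pr b_lt_p].
  assert (p_dvd : (p | Z.of_nat d * z))
    by (apply (Z.divide_trans _ (Zprod P)); [now apply dvd_Zprod|exact dvd]).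
  destruct (prime_mult p p_pr _ _ p_dvd) as [p_dvd_d|]; [|assumption].
  apply Z.divide_pos_le in p_dvd_d; lia.
Qed.

Definition admissible_residues (q b : nat) (Res : list nat) : Prop :=
  (1 <= q)%nat /\ NoDup Res /\ (forall s, In s Res -> (s < q)%nat) /\
  (forall s s' m, In s Res -> In s' Res ->
     (Z.of_nat q | Z.of_nat s - Z.of_nat s' - m * m) -> (Z.of_nat q | m)) /\
  (forall d, (1 <= d <= b)%nat -> forall z, (Z.of_nat q | Z.of_nat d * z) -> (Z.of_nat q | z)).

Lemma admissible_residues_exist (n b q : nat) (P : list Z) :
  length P = (2 * n)%nat -> NoDup P -> Forall (fun p => prime p /\ Z.of_nat b < p) P ->
  (2 <= b)%nat -> Z.of_nat q = Zprod P ->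
  exists Res : list nat, length Res = (2 ^ n)%nat /\ admissible_residues q b Res.
Proof.
  intros P_len P_nd P_spec b_ge2 q_eq.
  assert (P_pr : Forall prime P) by exact (Forall_impl _ (fun p p_spec => proj1 p_spec) P_spec).
  assert (q_pos : 0 < Z.of_nat q).
  { rewrite q_eq. apply Zprod_pos. eapply Forall_impl; [|exact P_spec]. intros p [_ ?]. lia. }
  destruct (square_difference_free_exists n P) as [Res [Res_len [Res_nd Res_sdf]]]; try assumption.
  { eapply Forall_impl; [|exact P_spec]. intros p [? ?]. split; [assumption|lia]. }
  rewrite <- q_eq in Res_sdf.
  set (res := fun s => Z.to_nat (s mod Z.of_nat q)).
  assert (res_eq : forall s, Z.of_nat (res s) = s mod Z.of_nat q).
  { intros s. apply Z2Nat.id, Z.mod_pos_bound. lia. }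
  assert (res_sdf : forall s s' m, In s Res -> In s' Res ->
            (Z.of_nat q | Z.of_nat (res s) - Z.of_nat (res s') - m * m) -> s = s').
  { intros s s' m s_in s'_in dvd. apply (Res_sdf s s' m s_in s'_in).
    rewrite !res_eq in dvd. rewrite !Zmod_eq_full in dvd by lia.
    replace (s - s' - m * m) with
      ((s - s / Z.of_nat q * Z.of_nat q - (s' - s' / Z.of_nat q * Z.of_nat q) - m * m)
       + (s / Z.of_nat q - s' / Z.of_nat q) * Z.of_nat q) by ring.
    apply Z.divide_add_r; [assumption|apply Z.divide_factor_r]. }
  exists (map res Res). split; [now rewrite length_map|].
  split; [lia|]. split; [|split; [|split]].
  - apply Injective_map_NoDup_in; [|assumption]. intros s s' s_in s'_in res_ss'.
    apply (res_sdf s s' 0 s_in s'_in). rewrite res_ss', Z.sub_diag. apply Z.divide_0_r.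
  - intros x x_in. apply in_map_iff in x_in as [s [<- _]].
    apply Nat2Z.inj_lt. rewrite res_eq. apply Z.mod_pos_bound. lia.
  - intros x x' m x_in x'_in dvd.
    apply in_map_iff in x_in as [s [<- s_in]]. apply in_map_iff in x'_in as [s' [<- s'_in]].
    assert (s = s') as <- by exact (res_sdf s s' m s_in s'_in dvd).
    rewrite q_eq in *. apply Zprod_dvd_square; [assumption|assumption|].
    apply Z.divide_opp_r.
    now replace (- (m * m)) with (Z.of_nat (res s) - Z.of_nat (res s) - m * m) by ring.
  - intros d d_range z. rewrite q_eq. now apply (Zprod_cancel_small P b d).
Qed.

Close Scope Z_scope.

(** * Counting with indicator sums *)

Definition indicator (P : Prop) : R := if excluded_middle_informative P then 1 else 0.

Lemma indicator_bounds (P : Prop) : 0 <= indicator P <= 1.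
Proof. unfold indicator; destruct excluded_middle_informative; lra. Qed.

Lemma indicator_true (P : Prop) : P -> indicator P = 1.
Proof. unfold indicator; destruct excluded_middle_informative; tauto. Qed.

Lemma indicator_false (P : Prop) : ~ P -> indicator P = 0.
Proof. unfold indicator; destruct excluded_middle_informative; tauto. Qed.

Lemma sumR_le (l : list nat) (g h : nat -> R) :
  (forall x, In x l -> g x <= h x) -> sumR l g <= sumR l h.
Proof. induction l; simpl; intros le_gh; [lra|]. apply Rplus_le_compat; auto. Qed.

Lemma sumR_ext (l : list nat) (g h : nat -> R) :
  (forall x, In x l -> g x = h x) -> sumR l g = sumR l h.
Proof. induction l; simpl; intros eq_gh; [reflexivity|]. rewrite eq_gh, IHl; auto. Qed.

Lemma sumR_scal (l : list nat) (c : R) (g : nat -> R) : sumR l (fun x => c * g x) = c * sumR l g.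
Proof. induction l; simpl; [ring|]. rewrite IHl; ring. Qed.

Lemma sumR_plus (l : list nat) (g h : nat -> R) :
  sumR l (fun x => g x + h x) = sumR l g + sumR l h.
Proof. induction l; simpl; [ring|]. rewrite IHl; ring. Qed.

Lemma sumR_const (l : list nat) (c : R) : sumR l (fun _ => c) = INR (length l) * c.
Proof. induction l; simpl sumR; [simpl; ring|]. rewrite IHl, length_cons, S_INR; ring. Qed.

Lemma sumR_swap (l1 l2 : list nat) (g : nat -> nat -> R) :
  sumR l1 (fun x => sumR l2 (g x)) = sumR l2 (fun y => sumR l1 (fun x => g x y)).
Proof.
  induction l1; simpl.
  - induction l2; simpl; [reflexivity|]. rewrite <- IHl2; ring.
  - rewrite IHl1, <- sumR_plus. reflexivity.
Qed.

Lemma sumR_indicator_In (l : list nat) (a : nat) :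
  NoDup l -> indicator (In a l) = sumR l (fun s => indicator (a = s)).
Proof.
  induction 1 as [|s l s_notin l_nd IH]; simpl; [now apply indicator_false|].
  destruct (excluded_middle_informative (a = s)) as [<-|a_neq].
  - rewrite !indicator_true by auto.
    rewrite (sumR_ext _ _ (fun _ => 0)), sumR_const; [ring|].
    intros x x_in. apply indicator_false. now intros ->.
  - rewrite (indicator_false (a = s)), <- IH by auto.
    unfold indicator. do 2 destruct excluded_middle_informative; try lra; intuition congruence.
Qed.

Lemma sumR_indicator_filter (l : list nat) (P : nat -> Prop) :
  sumR l (fun x => indicator (P x)) =
  INR (length (filter (fun x => if excluded_middle_informative (P x) then true else false) l)).
Proof.
  induction l as [|x l IH]; simpl; [reflexivity|].
  unfold indicator at 1. destruct excluded_middle_informative; rewrite IH; simpl length;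
    rewrite ?S_INR; ring.
Qed.

Section Counting.
Variables (l : list nat) (P : nat -> Prop).

Let selected : list nat :=
  filter (fun x => if excluded_middle_informative (P x) then true else false) l.

Let In_selected x : In x selected <-> In x l /\ P x.
Proof.
  unfold selected. rewrite filter_In.
  destruct excluded_middle_informative; intuition congruence.
Qed.

Lemma sumR_indicator_le_injective (h : nat -> nat) (T : nat) :
  NoDup l -> (forall y, In y l -> P y -> (h y < T)%nat) ->
  (forall y y', In y l -> In y' l -> P y -> P y' -> h y = h y' -> y = y') ->
  sumR l (fun y => indicator (P y)) <= INR T.
Proof.
  intros l_nd h_lt h_inj. rewrite sumR_indicator_filter; fold selected. apply le_INR.
  rewrite <- (length_map h selected), <- (length_seq T 0).
  apply NoDup_incl_length.
  - apply Injective_map_NoDup_in; [|now apply NoDup_filter].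
    intros y y' y_in y'_in. apply In_selected in y_in, y'_in. apply h_inj; tauto.
  - intros z z_in. apply in_map_iff in z_in as [y [<- y_in]].
    apply In_selected in y_in as [y_in Py]. apply in_seq. specialize (h_lt y y_in Py). lia.
Qed.

Lemma sumR_indicator_ge_injective (g : nat -> nat) (T : nat) :
  (forall t, (t < T)%nat -> In (g t) l /\ P (g t)) ->
  (forall t t', (t < T)%nat -> (t' < T)%nat -> g t = g t' -> t = t') ->
  INR T <= sumR l (fun y => indicator (P y)).
Proof.
  intros g_in g_inj. rewrite sumR_indicator_filter; fold selected. apply le_INR.
  rewrite <- (length_seq T 0), <- (length_map g (seq 0 T)).
  apply NoDup_incl_length.
  - apply Injective_map_NoDup_in; [|apply seq_NoDup].
    intros t t' t_in t'_in. apply in_seq in t_in, t'_in. apply g_inj; lia.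
  - intros z z_in. apply in_map_iff in z_in as [t [<- t_in]]. apply in_seq in t_in.
    apply In_selected, g_in. lia.
Qed.

End Counting.

Lemma INR_div_le (n q : nat) : (1 <= q)%nat -> INR (n / q) <= INR n / INR q.
Proof.
  intros q_pos. assert (0 < INR q) by (apply lt_0_INR; lia).
  apply Rmult_le_reg_r with (INR q); [assumption|].
  unfold Rdiv. rewrite Rmult_assoc, Rinv_l, Rmult_1_r, <- mult_INR by lra.
  rewrite Nat.mul_comm. apply le_INR, Nat.Div0.mul_div_le.
Qed.

Lemma INR_div_ge (n q : nat) : (1 <= q)%nat -> INR n / INR q - 1 <= INR (n / q).
Proof.
  intros q_pos. assert (0 < INR q) by (apply lt_0_INR; lia).
  assert (n_lt : (n < q * (n / q + 1))%nat).
  { pose proof (Nat.div_mod_eq n q). pose proof (Nat.mod_upper_bound n q). nia. }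
  apply lt_INR in n_lt. rewrite mult_INR, plus_INR in n_lt. simpl INR in n_lt.
  apply Rmult_le_reg_r with (INR q); [assumption|].
  unfold Rdiv. rewrite Rmult_minus_distr_r, Rmult_assoc, Rinv_l by lra. nra.
Qed.

Definition in_residues (q : nat) (Res : list nat) (x : nat) : Prop := In (x mod q) Res.

Section ResidueCounting.
Variables (q : nat) (Res : list nat).
Hypothesis q_pos : (1 <= q)%nat.
Hypothesis Res_nd : NoDup Res.

Lemma residue_count_interval_ge (X : nat) : (forall s, In s Res -> (s < q)%nat) ->
  INR (length Res) * (INR X / INR q - 2) <=
  sumR (seq 1 X) (fun x => indicator (in_residues q Res x)).
Proof.
  intros Res_lt.
  rewrite (sumR_ext _ _ (fun x => sumR Res (fun s => indicator (x mod q = s))))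
    by (intros x _; now apply sumR_indicator_In).
  rewrite sumR_swap, <- sumR_const. apply sumR_le. intros s s_in.
  apply Rle_trans with (INR (X / q - 1)).
  { pose proof (INR_div_ge X q q_pos).
    destruct (X / q)%nat as [|k]; simpl Nat.sub; [simpl in *; lra|].
    rewrite Nat.sub_0_r, S_INR in *. lra. }
  apply (sumR_indicator_ge_injective _ _ (fun t => s + (t + 1) * q)%nat).
  - intros t t_lt. specialize (Res_lt s s_in). pose proof (Nat.Div0.mul_div_le X q). split.
    + apply in_seq. nia.
    + rewrite Nat.Div0.mod_add. now apply Nat.mod_small.
  - intros t t' _ _ eq. nia.
Qed.

Lemma residue_count_AP_le (a d L : nat) :
  (forall z, (Z.of_nat q | Z.of_nat d * z)%Z -> (Z.of_nat q | z)%Z) ->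
  sumR (seq 0 L) (fun j => indicator (in_residues q Res (a + d * j))) <=
  INR (length Res) * (INR L / INR q + 1).
Proof.
  intros d_unit.
  rewrite (sumR_ext _ _ (fun j => sumR Res (fun s => indicator ((a + d * j) mod q = s))))
    by (intros j _; now apply sumR_indicator_In).
  rewrite sumR_swap, <- sumR_const. apply sumR_le. intros s _.
  apply Rle_trans with (INR ((L - 1) / q + 1)).
  2:{ rewrite plus_INR. pose proof (INR_div_le (L - 1) q q_pos).
      assert (INR (L - 1) <= INR L) by (apply le_INR; lia).
      assert (INR (L - 1) / INR q <= INR L / INR q)
        by (apply Rmult_le_compat_r; [apply Rlt_le, Rinv_0_lt_compat, lt_0_INR; lia|lra]).
      simpl INR. lra. }
  apply (sumR_indicator_le_injective _ _ (fun j => j / q)%nat); [apply seq_NoDup| |].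
  - intros j j_in _. apply in_seq in j_in.
    assert (j / q <= (L - 1) / q)%nat by (apply Nat.Div0.div_le_mono; lia). lia.
  - (* |j - j'| < q, and q | d (j - j') with d invertible mod q forces j = j'. *)
    intros j j' _ _ res_j res_j' block.
    pose proof (Nat.div_mod_eq (a + d * j) q). pose proof (Nat.div_mod_eq (a + d * j') q).
    pose proof (Nat.div_mod_eq j q). pose proof (Nat.div_mod_eq j' q).
    pose proof (Nat.mod_upper_bound j q). pose proof (Nat.mod_upper_bound j' q).
    destruct (d_unit (Z.of_nat j - Z.of_nat j')%Z) as [c c_eq].
    { exists (Z.of_nat ((a + d * j) / q) - Z.of_nat ((a + d * j') / q))%Z. nia. }
    assert (c = 0%Z) by nia. nia.
Qed.

Hypothesis Res_squares : forall s s' m, In s Res -> In s' Res ->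
  (Z.of_nat q | Z.of_nat s - Z.of_nat s' - m * m)%Z -> (Z.of_nat q | m)%Z.

Lemma square_difference_in_residues (x y : nat) :
  in_residues q Res x -> in_residues q Res y -> is_perfect_square (Z.of_nat x - Z.of_nat y) ->
  exists c, x = (y + (q * c) * (q * c))%nat.
Proof.
  intros x_in y_in [m m_eq].
  destruct (Res_squares _ _ m x_in y_in) as [c ->].
  - rewrite !Nat2Z.inj_mod.
    pose proof (Z.div_mod (Z.of_nat x) (Z.of_nat q)).
    pose proof (Z.div_mod (Z.of_nat y) (Z.of_nat q)).
    exists (Z.of_nat y / Z.of_nat q - Z.of_nat x / Z.of_nat q)%Z. lia.
  - exists (Z.to_nat (Z.abs c)). apply Nat2Z.inj.
    rewrite Nat2Z.inj_add, !Nat2Z.inj_mul, Z2Nat.id by lia.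
    destruct (Z.abs_eq_or_opp c) as [-> | ->]; lia.
Qed.

Lemma INR_sqrt_le (n : nat) : INR (Nat.sqrt n) <= sqrt (INR n).
Proof.
  rewrite <- (sqrt_square (INR (Nat.sqrt n))) by apply pos_INR.
  apply sqrt_le_1_alt. rewrite <- mult_INR. apply le_INR, Nat.sqrt_spec'.
Qed.

Lemma square_partner_count_le (X x : nat) : (x <= X)%nat -> in_residues q Res x ->
  sumR (seq 1 X)
    (fun y => indicator (in_residues q Res y /\ is_perfect_square (Z.of_nat x - Z.of_nat y)))
  <= sqrt (INR X) / INR q + 1.
Proof.
  intros x_le x_in.
  apply Rle_trans with (INR (Nat.sqrt X / q + 1)).
  2:{ rewrite plus_INR. pose proof (INR_div_le (Nat.sqrt X) q q_pos). pose proof (INR_sqrt_le X).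
      assert (INR (Nat.sqrt X) / INR q <= sqrt (INR X) / INR q)
        by (apply Rmult_le_compat_r; [apply Rlt_le, Rinv_0_lt_compat, lt_0_INR; lia|lra]).
      simpl INR. lra. }
  apply (sumR_indicator_le_injective _ _ (fun y => Nat.sqrt (x - y) / q)%nat); [apply seq_NoDup| |].
  - intros y y_in [y_res y_sq]. apply in_seq in y_in.
    destruct (square_difference_in_residues x y x_in y_res y_sq) as [c ->].
    replace (y + q * c * (q * c) - y)%nat with ((q * c) * (q * c))%nat by lia.
    rewrite Nat.sqrt_square, Nat.mul_comm, Nat.div_mul by lia.
    assert (c <= Nat.sqrt X / q)%nat; [|lia].
    apply Nat.div_le_lower_bound; [lia|]. apply Nat.sqrt_le_square. lia.
  - intros y y' _ _ [y_res y_sq] [y'_res y'_sq].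
    destruct (square_difference_in_residues x y x_in y_res y_sq) as [c c_eq].
    destruct (square_difference_in_residues x y' x_in y'_res y'_sq) as [c' c'_eq].
    rewrite c_eq at 1. rewrite c'_eq at 1.
    replace (y + q * c * (q * c) - y)%nat with ((q * c) * (q * c))%nat by lia.
    replace (y' + q * c' * (q * c') - y')%nat with ((q * c') * (q * c'))%nat by lia.
    rewrite !Nat.sqrt_square, !(Nat.mul_comm q), !Nat.div_mul by lia.
    intros ->. lia.
Qed.
End ResidueCounting.

(** * The residue-class example *)

Lemma subAP_length_lt (X a d L : nat) (B : R) : 0 < B -> is_subAP X a d L ->
  B + 1 <= INR d -> B * B < INR X -> INR L < INR X / B.
Proof.
  intros B_pos [a_pos [d_pos [L_pos fits]]] B_lt_d B2_lt.
  assert (span : INR d * (INR L - 1) <= INR X - 1).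
  { assert (fits' : (d * (L - 1) + 1 <= X)%nat) by lia.
    apply le_INR in fits'. rewrite plus_INR, mult_INR, minus_INR in fits' by lia.
    simpl INR in fits'. lra. }
  assert (L_ge1 : 1 <= INR L) by (apply (le_INR 1); lia).
  apply Rmult_lt_reg_r with B; [assumption|].
  replace (INR X / B * B) with (INR X) by (field; lra).
  destruct (Rlt_or_le (INR L * B) (INR X)) as [|long]; [assumption|exfalso].
  assert ((B + 1) * (INR L - 1) <= INR d * (INR L - 1)) by (apply Rmult_le_compat_r; lra).
  assert (L_le_B : INR L <= B) by lra.
  assert (INR L * B <= B * B) by (apply Rmult_le_compat_r; lra).
  lra.
Qed.

Section ResidueIndicator.
Variables (X q : nat) (Res : list nat) (alpha : R).
Hypothesis q_pos : (1 <= q)%nat.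
Hypothesis Res_nd : NoDup Res.
Hypothesis Res_lt : forall s, In s Res -> (s < q)%nat.
Hypothesis Res_large : 400 <= INR (length Res).
Hypothesis alpha_pos : 0 < alpha.
Hypothesis alpha_q : alpha * INR q <= 1.
Hypothesis q_small : 4 * INR q <= INR X.

Let M : R := sumR (seq 1 X) (fun x => indicator (in_residues q Res x)).

Definition residue_indicator (x : nat) : R := alpha * INR X / M * indicator (in_residues q Res x).

Let q_gt0 : 0 < INR q.
Proof. apply lt_0_INR. lia. Qed.

Lemma support_size_ge : INR (length Res) * INR X / (2 * INR q) <= M.
Proof.
  eapply Rle_trans; [|apply residue_count_interval_ge; assumption].
  assert (INR X / INR q - 2 - INR X / (2 * INR q) = (INR X - 4 * INR q) / (2 * INR q))
    by (field; lra).
  assert (0 <= (INR X - 4 * INR q) / (2 * INR q))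
    by (apply Rmult_le_pos; [|apply Rlt_le, Rinv_0_lt_compat]; lra).
  unfold Rdiv at 1. rewrite Rmult_assoc. apply Rmult_le_compat_l; lra.
Qed.

Let M_pos : 0 < M.
Proof.
  eapply Rlt_le_trans; [|apply support_size_ge].
  apply Rdiv_lt_0_compat; [apply Rmult_lt_0_compat|]; lra.
Qed.

Lemma residue_indicator_bounds (x : nat) : 0 <= residue_indicator x <= 1.
Proof.
  unfold residue_indicator. pose proof (indicator_bounds (in_residues q Res x)).
  assert (alpha * INR X <= M).
  { eapply Rle_trans; [|apply support_size_ge]. pose proof (pos_INR X).
    assert (0 <= INR X * (INR (length Res) - 2 * (alpha * INR q)) / (2 * INR q))
      by (apply Rmult_le_pos; [nra|apply Rlt_le, Rinv_0_lt_compat; lra]).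
    replace (INR (length Res) * INR X / (2 * INR q)) with
      (alpha * INR X + INR X * (INR (length Res) - 2 * (alpha * INR q)) / (2 * INR q))
      by (field; lra).
    lra. }
  assert (0 <= alpha * INR X / M <= 1).
  { split; [apply Rmult_le_pos; [nra|apply Rlt_le, Rinv_0_lt_compat; lra]|].
    apply Rmult_le_reg_r with M; [lra|].
    replace (alpha * INR X / M * M) with (alpha * INR X) by (field; lra). lra. }
  split; [apply Rmult_le_pos|]; nra.
Qed.

Lemma residue_indicator_avg : avg_interval X residue_indicator = alpha.
Proof. unfold avg_interval, residue_indicator. rewrite sumR_scal. fold M. field. lra. Qed.

Hypothesis Res_squares : forall s s' m, In s Res -> In s' Res ->
  (Z.of_nat q | Z.of_nat s - Z.of_nat s' - m * m)%Z -> (Z.of_nat q | m)%Z.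
Hypothesis q_sqrt : INR q <= sqrt (INR X).

Let kappa : R := alpha * INR X / M.

Let kappa_ge0 : 0 <= kappa.
Proof.
  apply Rmult_le_pos; [pose proof (pos_INR X); nra|apply Rlt_le, Rinv_0_lt_compat; lra].
Qed.

Lemma residue_indicator_square_row (x : nat) : (1 <= x <= X)%nat ->
  sumR (seq 1 X) (fun y =>
    if excluded_middle_informative (is_perfect_square (Z.of_nat x - Z.of_nat y))
    then residue_indicator x * residue_indicator y else 0)
  <= kappa * kappa * (sqrt (INR X) / INR q + 1) * indicator (in_residues q Res x).
Proof.
  intros x_range. unfold residue_indicator. fold M kappa.
  destruct (excluded_middle_informative (in_residues q Res x)) as [x_in|x_out].
  - rewrite (indicator_true (in_residues q Res x)), !Rmult_1_r by assumption.
    pose proof (square_partner_count_le q Res q_pos Res_squares X x ltac:(lia) x_in) as partners.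
    eapply Rle_trans; [|apply Rmult_le_compat_l; [apply Rmult_le_pos; assumption|exact partners]].
    rewrite <- sumR_scal. apply sumR_le. intros y _.
    destruct excluded_middle_informative as [sq|nsq].
    + destruct (excluded_middle_informative (in_residues q Res y)) as [y_in|y_out].
      * rewrite !indicator_true by (try split; assumption). lra.
      * rewrite !indicator_false by tauto. lra.
    + apply Rmult_le_pos; [apply Rmult_le_pos; exact kappa_ge0|apply indicator_bounds].
  - rewrite (indicator_false (in_residues q Res x)), Rmult_0_r by assumption.
    rewrite (sumR_ext _ _ (fun _ => 0)), sumR_const; [lra|].
    intros y _. destruct excluded_middle_informative; ring.
Qed.

(* Summing the rows gives kappa^2 M (sqrt X / q + 1) <= 4 alpha^2 X^(3/2) / |Res|,
   hence the requirement |Res| >= 400. *)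
Lemma residue_indicator_square_pairs :
  square_pair_sum X residue_indicator <= / 100 * alpha ^ 2 * (INR X * sqrt (INR X)).
Proof.
  unfold square_pair_sum.
  eapply Rle_trans.
  { apply sumR_le. intros x x_in. apply residue_indicator_square_row. apply in_seq in x_in. lia. }
  rewrite sumR_scal. fold M.
  set (N := INR (length Res)) in *. set (sX := sqrt (INR X)) in *.
  assert (X_pos : 0 < INR X) by lra.
  assert (sX_pos : 0 < sX) by (apply sqrt_lt_R0; lra).
  assert (inv_M : / M <= 2 * INR q / (N * INR X)).
  { replace (2 * INR q / (N * INR X)) with (/ (N * INR X / (2 * INR q))) by (field; lra).
    apply Rinv_le_contravar; [apply Rdiv_lt_0_compat; nra|apply support_size_ge]. }
  assert (partners : sX / INR q + 1 <= 2 * sX / INR q).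
  { apply Rmult_le_reg_r with (INR q); [lra|].
    replace ((sX / INR q + 1) * INR q) with (sX + INR q) by (field; lra).
    replace (2 * sX / INR q * INR q) with (2 * sX) by (field; lra). lra. }
  replace (kappa * kappa * (sX / INR q + 1) * M) with
    ((alpha * INR X) ^ 2 * / M * (sX / INR q + 1)) by (unfold kappa; field; lra).
  apply Rle_trans with ((alpha * INR X) ^ 2 * (2 * INR q / (N * INR X)) * (2 * sX / INR q)).
  { apply Rmult_le_compat; [|pose proof (Rinv_0_lt_compat _ q_gt0); nra| |assumption].
    - apply Rmult_le_pos; [nra|apply Rlt_le, Rinv_0_lt_compat; lra].
    - apply Rmult_le_compat_l; [nra|assumption]. }
  replace ((alpha * INR X) ^ 2 * (2 * INR q / (N * INR X)) * (2 * sX / INR q)) with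
    (4 / N * (alpha ^ 2 * (INR X * sX))) by (field; lra).
  rewrite Rmult_assoc. apply Rmult_le_compat_r; [apply Rmult_le_pos; [apply pow2_ge_0|nra]|].
  apply Rmult_le_reg_r with N; [lra|]. unfold Rdiv. rewrite Rmult_assoc, Rinv_l; lra.
Qed.

Lemma residue_indicator_AP_density (a d L : nat) :
  (forall z, (Z.of_nat q | Z.of_nat d * z)%Z -> (Z.of_nat q | z)%Z) -> (1 <= L)%nat ->
  avg_AP a d L residue_indicator >= 2 * alpha ->
  INR L * (INR X - 4 * INR q) <= INR X * INR q.
Proof.
  intros d_unit L_pos dense.
  set (N := INR (length Res)) in *.
  set (hits := sumR (seq 0 L) (fun j => indicator (in_residues q Res (a + d * j)))).
  assert (L_gt0 : 0 < INR L) by (apply lt_0_INR; lia).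
  assert (X_gt2q : 0 < INR X - 2 * INR q) by lra.
  assert (hits_le : hits <= N * (INR L / INR q + 1)) by now apply residue_count_AP_le.
  assert (M_ge : N * ((INR X - 2 * INR q) / INR q) <= M).
  { replace ((INR X - 2 * INR q) / INR q) with (INR X / INR q - 2) by (field; lra).
    now apply residue_count_interval_ge. }
  unfold avg_AP, residue_indicator in dense. rewrite sumR_scal in dense. fold hits in dense.
  apply Rge_le in dense.
  assert (dense' : 2 * alpha * INR L * M <= alpha * INR X * hits).
  { apply Rmult_le_compat_r with (r := INR L * M) in dense; [|nra].
    replace (alpha * INR X / M * hits / INR L * (INR L * M)) with (alpha * INR X * hits)
      in dense by (field; lra). lra. }
  assert (counted : 2 * INR L * (N * ((INR X - 2 * INR q) / INR q)) <=
                    INR X * (N * (INR L / INR q + 1))).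
  { apply Rmult_le_reg_l with alpha; [assumption|].
    assert (2 * alpha * INR L * (N * ((INR X - 2 * INR q) / INR q)) <= 2 * alpha * INR L * M)
      by (apply Rmult_le_compat_l; nra).
    assert (alpha * INR X * hits <= alpha * INR X * (N * (INR L / INR q + 1)))
      by (apply Rmult_le_compat_l; [pose proof (pos_INR X); nra|assumption]).
    lra. }
  replace (2 * INR L * (N * ((INR X - 2 * INR q) / INR q))) with
    (N / INR q * (2 * INR L * (INR X - 2 * INR q))) in counted by (field; lra).
  replace (INR X * (N * (INR L / INR q + 1))) with (N / INR q * (INR X * (INR L + INR q)))
    in counted by (field; lra).
  apply Rmult_le_reg_l in counted; [lra|apply Rdiv_lt_0_compat; lra].
Qed.

Lemma residue_indicator_AP_short (b : nat) (B : R) :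
  1 <= B -> B <= INR b ->
  (forall d, (1 <= d <= b)%nat ->
     forall z, (Z.of_nat q | Z.of_nat d * z)%Z -> (Z.of_nat q | z)%Z) ->
  INR q * B + 4 * INR q < INR X -> B * B < INR X ->
  forall a d L, is_subAP X a d L -> avg_AP a d L residue_indicator >= 2 * alpha ->
  INR L < INR X / B.
Proof.
  intros B_ge1 B_le_b units X_large X_gt_B2 a d L subAP dense.
  destruct (le_lt_dec d b) as [d_le_b|b_lt_d].
  - destruct subAP as (a_pos & d_pos & L_pos & _).
    pose proof (residue_indicator_AP_density a d L (units d ltac:(lia)) L_pos dense) as density.
    apply Rmult_lt_reg_r with B; [lra|].
    replace (INR X / B * B) with (INR X) by (field; lra).
    destruct (Rlt_or_le (INR L * B) (INR X)) as [|long]; [assumption|exfalso].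
    assert (INR X * (INR X - 4 * INR q) <= INR L * B * (INR X - 4 * INR q))
      by (apply Rmult_le_compat_r; lra).
    assert (X_pos : 0 < INR X) by lra.
    assert (short : INR X * (INR X - 4 * INR q) <= INR X * (INR q * B)) by nra.
    apply Rmult_le_reg_l in short; lra.
  - apply subAP_length_lt with a d; [lra|assumption| |assumption].
    apply Rle_trans with (INR (b + 1)); [rewrite plus_INR; simpl; lra|apply le_INR; lia].
Qed.

End ResidueIndicator.

Lemma Rpower_3_2 (x : R) : 0 < x -> Rpower x (3 / 2) = x * sqrt x.
Proof.
  intros x_pos. replace (3 / 2) with (1 + / 2) by field.
  now rewrite Rpower_plus, Rpower_1, Rpower_sqrt.
Qed.

Lemma residue_indicator_example (X q b : nat) (Res : list nat) (alpha B : R) :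
  admissible_residues q b Res -> 400 <= INR (length Res) -> 0 < alpha ->
  64 <= B -> B <= INR b -> INR q * B <= / alpha -> (/ alpha) ^ 4 <= INR X ->
  exists f : nat -> R,
    (forall x, (1 <= x <= X)%nat -> 0 <= f x <= 1) /\
    avg_interval X f = alpha /\
    square_pair_sum X f <= / 100 * alpha ^ 2 * Rpower (INR X) (3 / 2) /\
    (forall a d L, is_subAP X a d L -> avg_AP a d L f >= 2 * alpha -> INR L < INR X / B).
Proof.
  intros (q_pos & Res_nd & Res_lt & Res_squares & units) Res_large alpha_pos B_ge B_le_b qB_le X_ge.
  assert (alpha_Y : alpha * / alpha = 1) by (field; lra).
  remember (/ alpha) as Y eqn:Y_def.
  assert (q_ge1 : 1 <= INR q) by (apply (le_INR 1); lia).
  assert (Y_ge : 64 <= Y) by nra.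
  assert (Y2_ge : 4096 <= Y * Y) by nra.
  replace (Y ^ 4) with ((Y * Y) * (Y * Y)) in X_ge by ring.
  assert (Y2_le : 4096 * (Y * Y) <= INR X) by nra.
  assert (Y2_ge_Y : 64 * Y <= Y * Y) by nra.
  assert (q_le_Y : 64 * INR q <= Y) by nra.
  assert (B_le_Y : B <= Y) by nra.
  assert (X_pos : 0 < INR X) by nra.
  assert (alpha_q : alpha * INR q <= 1).
  { rewrite <- alpha_Y. apply Rmult_le_compat_l; nra. }
  assert (q_sqrt : INR q <= sqrt (INR X)).
  { rewrite <- (sqrt_square (INR q)) by lra. apply sqrt_le_1_alt. nra. }
  exists (residue_indicator X q Res alpha). split; [|split; [|split]].
  - intros x _. apply residue_indicator_bounds; try assumption; nra.
  - apply residue_indicator_avg; try assumption; nra.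
  - rewrite Rpower_3_2 by assumption.
    apply residue_indicator_square_pairs; try assumption; nra.
  - apply residue_indicator_AP_short with b; try assumption; nra.
Qed.

Lemma exp_le (x y : R) : x <= y -> exp x <= exp y.
Proof. intros [lt| ->]; [now left; apply exp_increasing|right; reflexivity]. Qed.

Lemma ln_le (x y : R) : 0 < x -> x <= y -> ln x <= ln y.
Proof. intros x_pos [lt| ->]; [now left; apply ln_increasing|right; reflexivity]. Qed.

Lemma exp_pow (x : R) (n : nat) : exp x ^ n = exp (INR n * x).
Proof.
  induction n as [|n IH]; simpl pow; [now rewrite Rmult_0_l, exp_0|].
  rewrite IH, S_INR, <- exp_plus. f_equal. ring.
Qed.

Lemma exists_nat_ge (r : R) : exists n : nat, r <= INR n.
Proof.
  destruct (archimed r) as [up_gt _].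
  destruct (Z_le_gt_dec 0 (up r)) as [up_ge0|up_lt0].
  - exists (Z.to_nat (up r)). rewrite INR_IZR_INZ, Z2Nat.id by assumption. lra.
  - exists 0%nat. assert (IZR (up r) <= 0) by (apply IZR_le; lia). simpl. lra.
Qed.

Lemma exists_pow2_between (B : R) : 1 <= B -> exists k : nat, B <= 2 ^ k <= 2 * B.
Proof.
  intros B_ge1. destruct (exists_nat_ge B) as [n B_le_n].
  assert (B_le_pow : B <= 2 ^ n).
  { enough (INR n <= 2 ^ n) by lra. clear. induction n; [simpl; lra|].
    rewrite S_INR. simpl pow. pose proof (pow_R1_Rle 2 n ltac:(lra)). lra. }
  clear B_le_n. induction n as [|n IH].
  - exists 0%nat. simpl in *. lra.
  - destruct (Rle_or_lt B (2 ^ n)) as [le|lt]; [now apply IH|].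
    exists (S n). simpl in *. lra.
Qed.

Lemma IZR_Zprod_le (P : list Z) (c : R) :
  Forall (fun p => (0 < p)%Z /\ IZR p <= c) P -> IZR (Zprod P) <= c ^ length P.
Proof.
  induction 1 as [|p P [p_pos p_le] P_spec IH]; simpl; [lra|].
  rewrite mult_IZR. apply Rmult_le_compat; try assumption.
  - now apply IZR_le, Z.lt_le_incl.
  - apply IZR_le, Z.lt_le_incl, Zprod_pos. eapply Forall_impl; [|exact P_spec]. now intros ? [].
Qed.

Lemma Rpower_3_4_le (x : R) : 256 <= x -> Rpower x (3 / 4) <= x / 4.
Proof.
  intros x_ge. unfold Rpower. rewrite <- (exp_ln (x / 4)) by lra. apply exp_le.
  unfold Rdiv at 2. rewrite ln_mult, ln_Rinv by lra.
  assert (ln 256 <= ln x) by (apply ln_le; lra).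
  replace 256 with (4 ^ 4) in H by ring. rewrite ln_pow in H by lra. simpl INR in H. lra.
Qed.

Lemma inv_alpha_bounds (eta alpha : R) (X : nat) : 0 < eta -> exp 256 <= INR X ->
  exp (- Rpower (ln (INR X)) (3 / 4 - eta)) <= alpha <= exp (-1000) ->
  0 < alpha /\ 1000 <= ln (/ alpha) /\ (/ alpha) ^ 4 <= INR X.
Proof.
  intros eta_pos X_large [alpha_lo alpha_hi].
  assert (alpha_pos : 0 < alpha) by (eapply Rlt_le_trans; [apply exp_pos|exact alpha_lo]).
  assert (X_pos : 0 < INR X) by (pose proof (exp_pos 256); lra).
  assert (lx_ge : 256 <= ln (INR X))
    by (rewrite <- (ln_exp 256); apply ln_le; [apply exp_pos|assumption]).
  assert (lx_pow : Rpower (ln (INR X)) (3 / 4 - eta) <= ln (INR X) / 4).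
  { apply Rle_trans with (Rpower (ln (INR X)) (3 / 4)); [apply Rle_Rpower; lra|].
    now apply Rpower_3_4_le. }
  split; [assumption|]. split.
  - rewrite ln_Rinv by assumption.
    assert (ln alpha <= -1000) by (rewrite <- (ln_exp (-1000)); now apply ln_le).
    lra.
  - assert (inv_le : / alpha <= exp (Rpower (ln (INR X)) (3 / 4 - eta))).
    { rewrite <- (Rinv_inv (exp _)), <- exp_Ropp.
      apply Rinv_le_contravar; [apply exp_pos|assumption]. }
    apply Rle_trans with (exp (Rpower (ln (INR X)) (3 / 4 - eta)) ^ 4).
    { apply pow_incr. split; [apply Rlt_le, Rinv_0_lt_compat|]; assumption. }
    rewrite exp_pow. apply Rle_trans with (exp (ln (INR X))).
    + apply exp_le. simpl INR. lra.
    + rewrite exp_ln by assumption. lra.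
Qed.

Lemma cube_root_bounds (L : R) : 1000 <= L ->
  10 <= Rpower L (1 / 3) /\ Rpower L (1 / 3) ^ 3 = L.
Proof.
  intros L_ge.
  assert (cube : Rpower L (1 / 3) ^ 3 = L).
  { rewrite <- Rpower_pow by apply exp_pos. rewrite Rpower_mult. simpl INR.
    replace (1 / 3 * (1 + 1 + 1)) with 1 by field. apply Rpower_1. lra. }
  split; [|assumption].
  assert (0 < Rpower L (1 / 3)) by apply exp_pos.
  destruct (Rle_or_lt 10 (Rpower L (1 / 3))) as [|small]; [assumption|].
  simpl in cube. nra.
Qed.

Lemma exp_10_gt_64 : 64 < exp 10.
Proof.
  replace 10 with (INR 3 * (10 / 3)) by (simpl; field).
  rewrite <- exp_pow. pose proof (exp_ineq1_le (10 / 3)).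
  apply Rlt_le_trans with ((1 + 10 / 3) ^ 3); [simpl; lra|].
  apply pow_incr. lra.
Qed.

Lemma modulus_times_exp_le (q u : R) : 10 <= u -> q <= 2 ^ 72 * exp u ^ 54 ->
  q * exp u <= exp (u ^ 3).
Proof.
  intros u_ge q_le.
  apply Rle_trans with (2 ^ 72 * exp u ^ 55).
  { replace (2 ^ 72 * exp u ^ 55) with (2 ^ 72 * exp u ^ 54 * exp u) by ring.
    apply Rmult_le_compat_r; [apply Rlt_le, exp_pos|assumption]. }
  assert (two_le : 2 ^ 72 <= exp 1 ^ 72)
    by (apply pow_incr; pose proof (exp_ineq1_le 1); lra).
  eapply Rle_trans; [apply Rmult_le_compat_r; [apply pow_le, Rlt_le, exp_pos|exact two_le]|].
  rewrite !exp_pow, <- exp_plus. apply exp_le. simpl INR. simpl pow. nra.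
Qed.

(** * Primes from the central binomial coefficient *)

Module CentralBinomial.
From mathcomp Require Import all_boot zify.
Local Open Scope nat_scope.

Lemma divn_double_le n d : 0 < d -> n.*2 %/ d <= (n %/ d).*2 + 1.
Proof.
move=> d_gt0; have := divn_eq n d; have := ltn_pmod n d_gt0.
have := divn_eq n.*2 d; have := ltn_pmod n.*2 d_gt0; nia.
Qed.

(* Legendre: each of the at most log_p (2n) base-p digits of 2n contributes a carry <= 1. *)
Lemma logn_bin_central p n : prime p -> 0 < n -> p ^ logn p 'C(n.*2, n) <= n.*2.
Proof.
move=> p_pr n_gt0; have p_gt1 := prime_gt1 p_pr.
set T := trunc_log p n.*2.
have pT_le : p ^ T <= n.*2 by apply: trunc_logP => //; lia.
have pT_gt : n.*2 < p ^ T.+1 by apply: trunc_log_ltn.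
suff : logn p 'C(n.*2, n) <= T by move=> le_T; apply: leq_trans pT_le; rewrite leq_exp2l.
have T_le : T <= n.*2 by apply: leq_trans (ltnW (ltn_expl T p_gt1)) pT_le.
have fact_split : logn p (n.*2)`! = logn p 'C(n.*2, n) + (logn p n`! + logn p n`!).
  have := bin_fact (leq_addr n n); rewrite addnK -addnn => <-.
  by rewrite lognM ?bin_gt0 ?muln_gt0 ?fact_gt0 ?leq_addr // lognM ?fact_gt0.
rewrite !logn_fact // in fact_split.
have widen : \sum_(1 <= k < n.+1) n %/ p ^ k = \sum_(1 <= k < (n.*2).+1) n %/ p ^ k.
  rewrite [RHS](@big_cat_nat _ _ _ n.+1) /=; [|lia|lia].
  rewrite [X in _ = _ + X]big1_seq ?addn0 // => k /andP[_].
  rewrite mem_index_iota => /andP[lt_nk _].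
  exact/divn_small/(leq_trans lt_nk)/ltnW/ltn_expl.
rewrite widen -big_split /= in fact_split.
have carries : \sum_(1 <= k < (n.*2).+1) n.*2 %/ p ^ k <=
               \sum_(1 <= k < (n.*2).+1) ((n %/ p ^ k + n %/ p ^ k) + (k <= T)).
  apply: leq_sum => k _; case: (leqP k T) => [_|lt_Tk].
    by rewrite addnn; apply: divn_double_le; rewrite expn_gt0 ltnW.
  by rewrite addn0 divn_small // (leq_trans pT_gt) // leq_exp2l.
have count_T : \sum_(1 <= k < (n.*2).+1) (k <= T) <= T.
  rewrite (@big_cat_nat _ _ _ T.+1) /=; [|lia|lia].
  rewrite [X in _ + X]big1_seq ?addn0; last first.
    by move=> k /andP[_]; rewrite mem_index_iota => /andP[lt_Tk _]; rewrite leqNgt lt_Tk.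
  apply: (@leq_trans (\sum_(1 <= k < T.+1) 1)); first by apply: leq_sum => k _; apply: leq_b1.
  by rewrite sum_nat_const_nat muln1 subn1.
rewrite big_split /= in carries; lia.
Qed.

Lemma bin_central_ge n : 2 ^ n <= 'C(n.*2, n).
Proof.
elim: n => [//|n IH]; rewrite doubleS binS expnS.
have sym : 'C((n.*2).+1, n.+1) = 'C((n.*2).+1, n).
  have lt_n : n.+1 <= n.*2.+1 by lia.
  by rewrite -(bin_sub lt_n) (_ : n.*2.+1 - n.+1 = n) //; lia.
rewrite sym; have := @leq_bin2l (n.*2) (n.*2).+1 n (leqnSn _); lia.
Qed.

Lemma bin_central_le n : 0 < n -> 'C(n.*2, n) <= n.*2 ^ size (primes 'C(n.*2, n)).
Proof.
move=> n_gt0; set C := 'C(n.*2, n).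
have C_gt0 : 0 < C by rewrite bin_gt0; lia.
rewrite {1}(prod_prime_decomp C_gt0) prime_decompE big_map /=.
have -> : n.*2 ^ size (primes C) = \prod_(p <- primes C) n.*2.
  by rewrite big_const_seq iter_muln_1 count_predT.
rewrite big_seq [X in _ <= X]big_seq.
apply: leq_prod => p; rewrite mem_primes => /and3P[p_pr _ _].
exact: logn_bin_central.
Qed.

Lemma primes_between m n r : 0 < n -> n.*2 ^ (m + r) < 2 ^ n ->
  exists P : seq nat,
    [/\ size P = r, uniq P & forall p : nat, p \in P -> [/\ prime p, m < p & p <= n.*2]].
Proof.
move=> n_gt0 small; set C := 'C(n.*2, n).
set large := [seq p <- primes C | m < p].
have large_spec (p : nat) : p \in large -> [/\ prime p, m < p & p <= n.*2].
  rewrite mem_filter => /andP[lt_mp p_in]; have := p_in; rewrite mem_primes => /and3P[p_pr _ _].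
  split=> //; apply: leq_trans (logn_bin_central p n p_pr n_gt0).
  by rewrite -{1}(expn1 p) leq_exp2l ?prime_gt1 // logn_gt0.
case: (leqP r (size large)) => [r_le|lt_r].
  exists (take r large); split; first by rewrite size_takel.
    by rewrite take_uniq // filter_uniq // primes_uniq.
  by move=> p /mem_take; apply: large_spec.
have small_count : count (predC (fun p => m < p)) (primes C) <= m.
  rewrite -size_filter -[m in _ <= m](size_iota 1 m).
  apply: uniq_leq_size; first by rewrite filter_uniq // primes_uniq.
  move=> p; rewrite mem_filter mem_primes mem_iota /= => /andP[le_pm /and3P[p_pr _ _]].
  have := prime_gt1 p_pr; lia.
have size_C := count_predC (fun p => m < p) (primes C).
rewrite -size_filter -/large in size_C.
have pow_le : n.*2 ^ size (primes C) <= n.*2 ^ (m + r) by apply: leq_pexp2l; lia.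
have C_le := bin_central_le n n_gt0; have C_ge := bin_central_ge n.
rewrite -/C in C_le C_ge; lia.
Qed.

Lemma InE (s : seq nat) x : List.In x s <-> x \in s.
Proof.
elim: s => [//|y s IH] /=; rewrite in_cons; split.
  by case=> [->|/IH ->]; rewrite ?eqxx ?orbT.
by case/orP=> [/eqP->|/IH]; [left|right].
Qed.

Lemma prime_Zprime p : prime p -> Znumtheory.prime (Z.of_nat p).
Proof.
move=> p_pr; have p_gt1 := prime_gt1 p_pr.
apply/Znumtheory.prime_alt; split=> [|z z_range [c Ec]]; first by lia.
have z_dvd : Z.to_nat z %| p by apply/dvdnP; exists (Z.to_nat c); lia.
by case/primeP: p_pr => _ /(_ _ z_dvd) /orP[/eqP|/eqP]; lia.
Qed.

Lemma natpowE m e : Nat.pow m e = m ^ e.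
Proof. by elim: e => // e IH; rewrite expnS -IH. Qed.

Lemma exponent_bound k : 3 <= k -> (3 * k + 1) * (2 ^ k + 18) < 2 ^ (3 * k).
Proof.
elim: k => [//|k IH] k_ge3; case: (ltnP k 3) => [lt_k3|/IH k_bound].
  by have -> : k = 2 by lia.
by rewrite (_ : 3 * k.+1 = (3 * k).+3) ?expnS; lia.
Qed.

Lemma Zprimes_above (k : nat) : (3 <= k)%coq_nat ->
  exists P : list Z, length P = 18 /\ List.NoDup P /\
    List.Forall (fun p => Znumtheory.prime p /\
      (Z.of_nat (Nat.pow 2 k) < p <= Z.of_nat (Nat.pow 2 (3 * k + 1)%coq_nat))%Z) P.
Proof.
move=> k_ge3; set n := 2 ^ (3 * k).
have n_gt0 : 0 < n by rewrite expn_gt0.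
have double_n : n.*2 = 2 ^ (3 * k + 1) by rewrite addn1 expnS mul2n.
have small : n.*2 ^ (2 ^ k + 18) < 2 ^ n.
  by rewrite double_n -expnM ltn_exp2l // exponent_bound //; lia.
have [P [size_P uniq_P P_spec]] := primes_between (2 ^ k) n 18 n_gt0 small.
exists (List.map Z.of_nat P); split; first by rewrite List.length_map.
split.
  apply: (FinFun.Injective_map_NoDup Nat2Z.inj).
  elim: P uniq_P {size_P P_spec} => [|p P IH] /=; first by constructor.
  by case/andP=> /negP p_notin /IH P_nd; constructor=> // /InE.
apply/List.Forall_forall => _ /List.in_map_iff[p [<- /InE /P_spec[p_pr lt_mp le_pn]]].
split; first exact: prime_Zprime.
rewrite !natpowE (_ : (3 * k + 1)%coq_nat = 3 * k + 1) // -double_n; lia.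
Qed.
End CentralBinomial.

(* q is a product of 18 primes in (2^k, 2^(3k+1)] with B <= 2^k <= 2 B. *)
Lemma modulus_exists (B : R) : 64 <= B ->
  exists (b q : nat) (Res : list nat), B <= INR b /\ INR q <= 2 ^ 72 * B ^ 54 /\
    400 <= INR (length Res) /\ admissible_residues q b Res.
Proof.
  intros B_ge. destruct (exists_pow2_between B) as [k [B_le two_k_le]]; [lra|].
  assert (k_ge3 : (3 <= k)%nat).
  { destruct (le_lt_dec 3 k) as [|k_lt]; [assumption|].
    assert (2 ^ k <= 2 ^ 2) by (apply Rle_pow; [lra|lia]). simpl in *. lra. }
  destruct (CentralBinomial.Zprimes_above k k_ge3) as [P [P_len [P_nd P_spec]]].
  assert (P_pos : (0 < Zprod P)%Z).
  { apply Zprod_pos. eapply Forall_impl; [|exact P_spec]. intros p [_ ?]. lia. }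
  destruct (admissible_residues_exist 9 (2 ^ k) (Z.to_nat (Zprod P)) P) as [Res [Res_len adm]];
    try assumption.
  - eapply Forall_impl; [|exact P_spec]. intros p [? ?]. split; [assumption|lia].
  - change 2%nat with (2 ^ 1)%nat at 1. apply Nat.pow_le_mono_r; lia.
  - now apply Z2Nat.id, Z.lt_le_incl.
  - exists (2 ^ k)%nat, (Z.to_nat (Zprod P)), Res. rewrite pow_INR. split; [assumption|]. split.
    + assert (p_bound : Forall (fun p => (0 < p)%Z /\ IZR p <= 2 * (2 * B) ^ 3) P).
      { eapply Forall_impl; [|exact P_spec]. intros p [_ [p_gt p_le]]. split; [lia|].
        apply Rle_trans with (INR (2 ^ (3 * k + 1))).
        { rewrite INR_IZR_INZ. now apply IZR_le. }
        rewrite pow_INR, pow_add, Nat.mul_comm, pow_mult. simpl INR.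
        replace (1 + 1) with 2 by ring. rewrite pow_1, Rmult_comm.
        apply Rmult_le_compat_l; [lra|]. apply pow_incr. split; [apply pow_le|]; lra. }
      pose proof (IZR_Zprod_le P _ p_bound) as q_le. rewrite P_len in q_le.
      rewrite INR_IZR_INZ, Z2Nat.id by lia.
      replace (2 ^ 72 * B ^ 54) with ((2 * (2 * B) ^ 3) ^ 18) by ring. exact q_le.
    + split; [|assumption]. rewrite Res_len, pow_INR. simpl. lra.
Qed.

Theorem proposition7p1 :
  forall eta : R, 0 < eta ->
  exists alpha0 : R, 0 < alpha0 /\
  exists X0 : nat, forall X : nat, (X0 <= X)%nat ->
  forall alpha : R,
    exp (- Rpower (ln (INR X)) (3/4 - eta)) <= alpha <= alpha0 ->
    exists f : nat -> R,
      (forall x : nat, (1 <= x <= X)%nat -> 0 <= f x <= 1) /\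
      avg_interval X f = alpha /\
      square_pair_sum X f <= / 100 * alpha ^ 2 * Rpower (INR X) (3/2) /\
      (forall a d L : nat, is_subAP X a d L -> avg_AP a d L f >= 2 * alpha ->
         INR L < INR X * exp (- Rpower (ln (/ alpha)) (1/3))).
Proof.
  intros eta eta_pos.
  exists (exp (-1000)). split; [apply exp_pos|].
  destruct (exists_nat_ge (exp 256)) as [X0 X0_le].
  exists X0. intros X X_ge alpha alpha_range.
  assert (X_large : exp 256 <= INR X) by (apply le_INR in X_ge; lra).
  destruct (inv_alpha_bounds eta alpha X eta_pos X_large alpha_range)
    as (alpha_pos & log_ge & X_ge_inv).
  destruct (cube_root_bounds (ln (/ alpha)) log_ge) as [u_ge u_cube].
  revert u_ge u_cube. generalize (Rpower (ln (/ alpha)) (1 / 3)). intros u u_ge u_cube.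
  assert (B_ge : 64 <= exp u) by (pose proof exp_10_gt_64; pose proof (exp_le 10 u u_ge); lra).
  destruct (modulus_exists (exp u) B_ge) as (b & q & Res & B_le_b & q_le & Res_large & adm).
  pose proof (modulus_times_exp_le (INR q) u u_ge q_le) as qB_le.
  rewrite u_cube, exp_ln in qB_le by (apply Rinv_0_lt_compat; assumption).
  destruct (residue_indicator_example X q b Res alpha (exp u) adm Res_large alpha_pos B_ge B_le_b
              qB_le X_ge_inv) as (f & f_range & f_avg & f_squares & f_AP).
  exists f. split; [exact f_range|]. split; [exact f_avg|]. split; [exact f_squares|].
  intros a d L subAP dense. rewrite exp_Ropp. exact (f_AP a d L subAP dense).
Qed.
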